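(* Let $t,t'$ be graph monomials in $\mathcal{D}$ with vertex sets $V,V'$ and roots $\rho,\rho'$, and let $T=\tilde\Delta(tt')$, whose vertex set is $(V\sqcup V')/(\rho\sim\rho')$. Let $\pi$ be a partition of the vertex set of $T$ such that no block of $\pi$ contains two distinct vertices of $V$ and no block contains two distinct vertices of $V'$, and suppose that $T^\pi$ is an oriented cactus. Then every block of $\pi$ consists of exactly one vertex of $V$ and one vertex of $V'$ (the root block being $\{\rho=\rho'\}$), so $\pi$ induces a bijection $f_\pi:V\to V'$ with $v\overset{\pi}{\sim}f_\pi(v)$, and $f_\pi$ reverses adjacency: for $v,w\in V$, $t$ has an edge from $v$ to $w$ if and only if $t'$ has an edge from $f_\pi(w)$ to $f_\pi(v)$.
   Context: $(\mathcal{A},\varphi)$ is a tracial noncommutative probability space (unital complex algebra, unital tracial functional). A graph monomial in $\mathcal{A}$ is a finite connected directed multigraph with distinguished, not necessarily distinct, vertices $v_{\mathrm{in}},v_{\mathrm{out}}$ and edge labels in $\mathcal{A}$. The product $tt'$ identifies the input of $t$ with the output of $t'$; $\tilde\Delta(s)$ is the unrooted labelled graph obtained from $s$ by identifying its input and output. For a partition $\pi$ of the vertices, $T^\pi$ identifies the vertices in each block. A cactus is a connected multigraph with every edge in exactly one simple cycle (loops and pairs of parallel edges count as cycles); an oriented cactus is a directed multigraph whose underlying multigraph is a cactus and all of whose simple cycles are directed cycles. $\mathcal{D}$ is the set of graph monomials with $v_{\mathrm{in}}=v_{\mathrm{out}}$ (the root) such that: (A1) the underlying undirected graph is a tree; (A2)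 the root has degree $1$; (A3) no edge is labelled by a scalar multiple of $1_{\mathcal{A}}$; (A4) no vertex has both indegree and outdegree equal to one. *)

From HB Require Import structures.
From mathcomp Require Import all_boot all_order all_algebra.
From mathcomp Require Import complex.
From mathcomp Require Import reals.
Set Implicit Arguments. Unset Strict Implicit. Unset Printing Implicit Defensive.
Import Order.TTheory GRing.Theory Num.Theory.
Local Open Scope ring_scope.

Record graph (A : Type) := Graph {
  gV : finType;
  gE : finType;
  gsrc : gE -> gV;
  gtgt : gE -> gV;
  glab : gE -> A }.

Record gmono (A : Type) := GMono {
  gg :> graph A;
  gin : gV gg;
  gout : gV gg }.

Section Walks.
Variables (A : Type) (G : graph A).

(* A step of an undirected walk: an edge together with its traversal
   direction (true = from source to target, false = backwards). *)
Definition sfrom (st : gE G * bool) : gV G :=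
  if st.2 then gsrc st.1 else gtgt st.1.
Definition sto (st : gE G * bool) : gV G :=
  if st.2 then gtgt st.1 else gsrc st.1.

Fixpoint walk (x : gV G) (s : seq (gE G * bool)) : bool :=
  match s with
  | [::] => true
  | st :: s' => (sfrom st == x) && walk (sto st) s'
  end.

Definition wend (x : gV G) (s : seq (gE G * bool)) : gV G := last x (map sto s).

Definition connected : Prop :=
  forall x y : gV G, exists s, walk x s /\ wend x s = y.

(* simple cycle of the underlying multigraph (loops and pairs of parallel
   edges included): nonempty closed walk, no repeated edge, no repeated vertex *)
Definition scycle (x : gV G) (s : seq (gE G * bool)) : bool :=
  [&& s != [::], walk x s, wend x s == x, uniq (map fst s) & uniq (map sfrom s)].

Definition cedges (s : seq (gE G * bool)) : {set gE G} :=
  [set e | e \in map fst s].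

Definition is_tree : Prop :=
  connected /\ forall x s, ~~ scycle x s.

Definition cactus : Prop :=
  connected /\
  forall e : gE G, exists S : {set gE G},
    [/\ e \in S,
        (exists x s, scycle x s /\ cedges s = S) &
        (forall x s, scycle x s -> e \in cedges s -> cedges s = S)].

(* a simple cycle is a directed cycle: all edges traversed in the same
   direction (the cycle read one way or the other) *)
Definition directed_cycle (s : seq (gE G * bool)) : bool :=
  all (fun st => st.2) s || all (fun st => ~~ st.2) s.

Definition oriented_cactus : Prop :=
  cactus /\ forall x s, scycle x s -> directed_cycle s.

Definition indeg (v : gV G) : nat := #|[set e | gtgt e == v]|.
Definition outdeg (v : gV G) : nat := #|[set e | gsrc e == v]|.

Definition has_edge (v w : gV G) : Prop := exists e, gsrc e = v /\ gtgt e = w.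

End Walks.

(* Identifying two vertices a, b of a finite type (b is merged into a). *)
Section Glue.
Variables (X : finType) (a b : X).
Definition gluev := {x : X | (x != b) || (a == b)}.
Lemma glue_proof (x : X) : ((if x == b then a else x) != b) || (a == b).
Proof. case: (x =P b) => [_|/eqP ->] //; by case: (a =P b). Qed.
Definition glue (x : X) : gluev := exist (fun y : X => (y != b) || (a == b)) _ (glue_proof x).
End Glue.

(* product t t' : identify the input of t with the output of t' *)
Definition gmul (A : Type) (t t' : gmono A) : gmono A :=
  let g := glue (inl (gin t) : gV t + gV t') (inr (gout t')) in
  @GMono A
    (@Graph A (gluev (inl (gin t) : gV t + gV t') (inr (gout t')))
       (gE t + gE t')%type
       (fun e => match e with inl e => g (inl (gsrc e)) | inr e => g (inr (gsrc e)) end)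
       (fun e => match e with inl e => g (inl (gtgt e)) | inr e => g (inr (gtgt e)) end)
       (fun e => match e with inl e => glab e | inr e => glab e end))
    (g (inr (gin t')))
    (g (inl (gout t))).

(* tilde Delta (s): identify input and output, forget the roots *)
Definition gdelta (A : Type) (s : gmono A) : graph A :=
  let g := glue (gin s) (gout s) in
  @Graph A (gluev (gin s) (gout s)) (gE s)
    (fun e => g (gsrc e)) (fun e => g (gtgt e)) (@glab _ s).

Lemma pblock_in (T : finType) (P : {set {set T}}) (hP : partition P [set: T])
  (x : T) : pblock P x \in P.
Proof.
apply: pblock_mem; move: hP => /andP[/eqP -> _]; exact: in_setT.
Qed.

Definition qgraph (A : Type) (G : graph A) (P : {set {set gV G}})
    (hP : partition P [set: gV G]) : graph A :=
  @Graph A {B : {set gV G} | B \in P} (gE G)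
    (fun e => exist (fun B : {set gV G} => B \in P) _ (pblock_in hP (gsrc e)))
    (fun e => exist (fun B : {set gV G} => B \in P) _ (pblock_in hP (gtgt e)))
    (@glab _ G).

Definition inD (K : fieldType) (A : algType K) (t : gmono A) : Prop :=
  [/\ gin t = gout t,
      is_tree t,                                             (* (A1) *)
      indeg (gin t) + outdeg (gin t) = 1%N,                  (* (A2) *)
      (forall (e : gE t) (c : K), glab e <> c%:A)            (* (A3) *)
    & (forall v : gV t, ~ (indeg v = 1%N /\ outdeg v = 1%N))]. (* (A4) *)

Definition Tgraph (A : Type) (t t' : gmono A) : graph A := gdelta (gmul t t').

Definition embL (A : Type) (t t' : gmono A) (v : gV t) : gV (Tgraph t t') :=
  glue (gin (gmul t t')) (gout (gmul t t'))
    (glue (inl (gin t) : gV t + gV t') (inr (gout t')) (inl v)).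

Definition embR (A : Type) (t t' : gmono A) (v : gV t') : gV (Tgraph t t') :=
  glue (gin (gmul t t')) (gout (gmul t t'))
    (glue (inl (gin t) : gV t + gV t') (inr (gout t')) (inr v)).

Definition tracial_state (R : realType) (A : algType R[i])
    (phi : A -> (R[i])^o) : Prop :=
  [/\ linear phi, phi 1 = 1 & forall a b : A, phi (a * b) = phi (b * a)].

(* Write H for T^pi, into which t and t' map injectively on vertices, their
   edge sets partitioning the edges of H.  As t is a tree, every simple cycle
   of H uses an edge of t'.  Suppose a vertex v of t shares its block with no
   vertex of t'.  Then all edges of H at v come from t, and the cycle through
   any of them leaves v, crosses into the connected graph t' and comes back,
   so the other ends of all edges at v are joined away from v.  Hence any two
   edges at v lie on a common simple cycle; by the cactus property all edges
   at v lie on one cycle, which meets v in exactly two edges, and since it is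
   directed v has indegree and outdegree 1, against (A4).  So every block
   pairs a vertex of t with one of t', which gives the bijection f.
   For an edge v -> w of t, the edge followed by the path of the tree t' from
   f w to f v is a simple cycle.  An edge g of t' on it lies also on the cycle
   closed by the path of t between the ends of g, which contains no other edge
   of t'; by the cactus property both cycles coincide, so the path is g alone,
   and directedness orients g from f w to f v. *)

From HB Require Import structures.
From mathcomp Require Import all_boot all_order all_algebra.
From mathcomp Require Import complex reals.
Import Order.TTheory GRing.Theory Num.Theory.
Local Open Scope ring_scope.

Set Implicit Arguments. Unset Strict Implicit. Unset Printing Implicit Defensive.

Section WalkTheory.
Variables (A : Type) (G : graph A).
Implicit Types (x y z b : gV G) (s : seq (gE G * bool)) (st : gE G * bool).

Definition wverts x s := x :: map (@sto _ G) s.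
Definition flip_step st : gE G * bool := (st.1, ~~ st.2).
Definition wrev s := rev (map flip_step s).
Definition avoids b s := all (fun st => (sfrom st != b) && (sto st != b)) s.
Definition reach_off b y z := exists s, [/\ walk y s, wend y s = z & avoids b s].

Lemma sfrom_flip st : sfrom (flip_step st) = sto st.
Proof. by case: st => e []. Qed.

Lemma sto_flip st : sto (flip_step st) = sfrom st.
Proof. by case: st => e []. Qed.

Lemma walk_cat x s1 s2 : walk x (s1 ++ s2) = walk x s1 && walk (wend x s1) s2.
Proof. by elim: s1 x => [|st s1 IH] x //=; rewrite IH andbA. Qed.

Lemma wend_cat x s1 s2 : wend x (s1 ++ s2) = wend (wend x s1) s2.
Proof. by rewrite /wend map_cat last_cat. Qed.

Lemma wend_rcons x s st : wend x (rcons s st) = sto st.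
Proof. by rewrite /wend map_rcons last_rcons. Qed.

Lemma walk_rcons x s st :
  walk x (rcons s st) = walk x s && (sfrom st == wend x s).
Proof. by rewrite -cats1 walk_cat /= andbT. Qed.

Lemma wverts_sfrom x s :
  walk x s -> rcons (map (@sfrom _ G) s) (wend x s) = wverts x s.
Proof.
elim: s x => [|st s IH] x //= /andP[/eqP -> hw].
by rewrite /wverts /= -[wend _ _]/(wend (sto st) s) IH.
Qed.

Lemma sfrom_in_wverts x s st : walk x s -> st \in s -> sfrom st \in wverts x s.
Proof. by move=> hw hs; rewrite -(wverts_sfrom hw) mem_rcons inE map_f ?orbT. Qed.

Lemma sto_in_wverts x s st : st \in s -> sto st \in wverts x s.
Proof. by move=> hs; rewrite inE map_f ?orbT. Qed.

Lemma avoids_wverts x s b : walk x s -> b \notin wverts x s -> avoids b s.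
Proof.
move=> hw hb; apply/allP => st hs /=.
by apply/andP; split; apply: contraNneq hb => <-;
  [exact: sfrom_in_wverts | exact: sto_in_wverts].
Qed.

Lemma avoids_notin_wverts b x s : avoids b s -> x != b -> b \notin wverts x s.
Proof.
move=> hav hx; rewrite inE negb_or eq_sym hx /=; apply/mapP => -[st hs hb].
by move/allP: hav => /(_ st hs) /andP[_]; rewrite -hb eqxx.
Qed.

Lemma walk_wrev x s :
  walk x s -> walk (wend x s) (wrev s) /\ wend (wend x s) (wrev s) = x.
Proof.
elim: s x => [|st s IH] x //= /andP[/eqP hx hw].
have [h1 h2] := IH _ hw.
rewrite /wrev map_cons rev_cons -/(wrev s) walk_rcons wend_rcons sto_flip hx.
by rewrite h1 /= sfrom_flip h2 eqxx.
Qed.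

Lemma avoids_wrev b s : avoids b (wrev s) = avoids b s.
Proof.
rewrite /avoids /wrev all_rev all_map; apply: eq_all => st /=.
by rewrite sfrom_flip sto_flip andbC.
Qed.

Lemma reach_off_sym b y z : reach_off b y z -> reach_off b z y.
Proof.
case=> s [hw <- ha]; have [h1 h2] := walk_wrev hw.
by exists (wrev s); rewrite avoids_wrev.
Qed.

Lemma reach_off_trans b x y z :
  reach_off b x y -> reach_off b y z -> reach_off b x z.
Proof.
case=> s1 [h1 e1 a1] [s2 [h2 e2 a2]]; exists (s1 ++ s2).
by rewrite walk_cat wend_cat e1 h1 h2 e2 /avoids all_cat; split => //; apply/andP.
Qed.

Lemma reach_off_mid b x s st : walk x s -> avoids b s -> st \in s ->
  reach_off b x (sfrom st) /\ reach_off b (sfrom st) (wend x s).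
Proof.
move=> hw ha hs; case/splitPr: hs hw ha => s1 s2.
rewrite walk_cat /= => /and3P[hw1 /eqP hst hw2].
rewrite /avoids all_cat /= => /and3P[ha1 hast ha2].
split; first by exists s1.
by exists (st :: s2); rewrite /= hst eqxx wend_cat /= -hst hw2 /avoids /= hast.
Qed.

Lemma uniq_subwalk x s : walk x s -> exists s',
  [/\ walk x s', wend x s' = wend x s, uniq (wverts x s') & {subset s' <= s}].
Proof.
elim: s x => [|st s IH] x /=; first by exists [::].
case/andP=> /eqP hx /IH [s1 [w1 e1 u1 sub1]].
rewrite -[wend x _]/(wend (sto st) s) -e1.
have sub1' : {subset s1 <= st :: s} by move=> y /sub1 hy; rewrite inE hy orbT.
case: (boolP (x \in wverts (sto st) s1)) => hin; last first.
  exists (st :: s1); split => //; first by rewrite /= hx eqxx.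
    by rewrite /wverts /= -/(wverts (sto st) s1) hin.
  by move=> y; rewrite !inE => /orP[->|/sub1 ->]; rewrite ?orbT.
move: hin; rewrite inE => /orP[/eqP ->|/mapP [st0 hst0 ->]]; first by exists s1.
case/splitPr: hst0 w1 e1 u1 sub1' => sa sb.
rewrite walk_cat wend_cat /= => /and3P[_ _ wb] e1.
rewrite /wverts map_cat => hu sub.
have : uniq ((sto st :: map (@sto _ G) sa) ++ wverts (sto st0) sb) by [].
rewrite cat_uniq => /and3P[_ _ ub].
by exists sb; split => // y hy; apply: sub; rewrite mem_cat inE hy !orbT.
Qed.

Lemma sfrom_same_edge st st0 :
  st.1 = st0.1 -> sfrom st = sfrom st0 \/ sfrom st = sto st0.
Proof. by case: st st0 => e [] [e0 []] /= <-; auto. Qed.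

Lemma uniq_wverts_edges x s : walk x s -> uniq (wverts x s) -> uniq (map fst s).
Proof.
elim: s x => [|st s IH] x //= /andP[/eqP hx hw] /andP[hn hu].
rewrite (IH _ hw hu) andbT; apply/mapP => -[st0 hs0 he].
move: hn; rewrite -hx; case: (sfrom_same_edge he) => ->.
  by rewrite (sfrom_in_wverts hw hs0).
by rewrite (sto_in_wverts _ hs0).
Qed.

Lemma scycle_close st a q : sto st = a -> walk a q -> wend a q = sfrom st ->
  uniq (wverts a q) -> st.1 \notin map fst q -> scycle (sfrom st) (st :: q).
Proof.
move=> <- hw he hu hn; rewrite /scycle /= eqxx hw.
rewrite -[wend _ (st :: q)]/(wend (sto st) q) he eqxx hn (uniq_wverts_edges hw hu).
by move: hu; rewrite -(wverts_sfrom hw) he rcons_uniq.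
Qed.

Lemma scycle_rot x s1 st s2 : scycle x (s1 ++ st :: s2) ->
  scycle (sfrom st) (st :: s2 ++ s1) /\
  cedges (st :: s2 ++ s1) = cedges (s1 ++ st :: s2).
Proof.
have hp : perm_eq (s1 ++ st :: s2) (st :: s2 ++ s1) by rewrite perm_catC.
move=> /and5P[_ hw /eqP he hu1 hu2]; split; last first.
  by apply/setP => e; rewrite !inE (perm_mem (perm_map fst hp)).
move: hw he; rewrite walk_cat wend_cat /= => /andP[hw1 /andP[/eqP hs hw2]].
rewrite -[wend _ (st :: s2)]/(wend (sto st) s2) => he.
apply/and5P; split => //.
- by rewrite /= eqxx walk_cat hw2 he hw1.
- by rewrite -[wend _ (st :: _)]/(wend (sto st) (s2 ++ s1)) wend_cat he hs.
- by rewrite -(perm_uniq (perm_map fst hp)).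
- by rewrite -(perm_uniq (perm_map (@sfrom _ G) hp)).
Qed.

Lemma closed_walk_next x s st : walk x s -> wend x s = x -> st \in s ->
  exists2 st2, st2 \in s & sfrom st2 = sto st.
Proof.
move=> hw he hs; case/splitPr: hs hw he => s1 s2.
case: s2 => [|st2 s3]; last first.
  rewrite walk_cat /= => /andP[_ /andP[_ /andP[/eqP h _]]] _.
  by exists st2; rewrite // mem_cat !inE eqxx !orbT.
rewrite walk_cat wend_cat => /andP[hw1 /andP[/eqP hsx _]].
rewrite -[wend _ [:: st]]/(sto st) => ->.
case: s1 hw1 hsx => [|st1 s1] /= hw1 hsx; first by exists st; rewrite ?inE.
by case/andP: hw1 => /eqP h1 _; exists st1; rewrite ?inE ?eqxx.
Qed.

Lemma scycle_reroot x s st y : scycle x s -> st \in s ->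
  sfrom st = y \/ sto st = y ->
  exists s', scycle y s' /\ cedges s' = cedges s.
Proof.
move=> c hs hy.
have [stb hsb hb] : exists2 stb, stb \in s & sfrom stb = y.
  case: hy => [|<-]; first by exists st.
  by case/and5P: c => _ hw /eqP he _ _; apply: closed_walk_next hw he hs.
case/splitPr: hsb c => s1 s2 /scycle_rot [c' hce].
by exists (stb :: s2 ++ s1); rewrite -hb.
Qed.

Lemma scycle_interior y st1 r st2 : scycle y (st1 :: rcons r st2) ->
  [/\ sfrom st1 = y, walk (sto st1) r, wend (sto st1) r = sfrom st2,
      sto st2 = y & avoids y r].
Proof.
case/and5P=> _ /= /andP[/eqP hy hw] /eqP he _ hu.
rewrite -[wend _ _]/(wend (sto st1) (rcons r st2)) wend_rcons in he.
move: hw hu; rewrite walk_rcons map_rcons => /andP[hw /eqP hf].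
rewrite hf (wverts_sfrom hw) hy => /andP[hn _].
by split => //; apply: avoids_wverts hn.
Qed.

Lemma directed_cycle_dir s st1 st2 : directed_cycle s ->
  st1 \in s -> st2 \in s -> st1.2 = st2.2.
Proof.
by case/orP=> /allP h /h h1 /h h2; [rewrite h1 h2 | rewrite (negbTE h1) (negbTE h2)].
Qed.

End WalkTheory.

Section MapWalk.
Variables (A : Type) (G1 G2 : graph A).
Variables (phi : gV G1 -> gV G2) (io : gE G1 -> gE G2).
Hypotheses (hsrc : forall e, gsrc (io e) = phi (gsrc e))
           (htgt : forall e, gtgt (io e) = phi (gtgt e)).

Definition mapw (s : seq (gE G1 * bool)) : seq (gE G2 * bool) :=
  map (fun st => (io st.1, st.2)) s.

Lemma sfrom_map st : sfrom (io st.1, st.2) = phi (sfrom st).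
Proof. by case: st => e []; rewrite /sfrom /= ?hsrc ?htgt. Qed.

Lemma sto_map st : sto (io st.1, st.2) = phi (sto st).
Proof. by case: st => e []; rewrite /sto /= ?hsrc ?htgt. Qed.

Lemma walk_map x s : walk x s -> walk (phi x) (mapw s).
Proof.
elim: s x => [|st s IH] x //= /andP[/eqP hx hw].
by rewrite sfrom_map hx eqxx sto_map IH.
Qed.

Lemma map_sto_map s : map (@sto _ G2) (mapw s) = map phi (map (@sto _ G1) s).
Proof. by rewrite -!map_comp; apply: eq_map => st /=; rewrite sto_map. Qed.

Lemma map_sfrom_map s :
  map (@sfrom _ G2) (mapw s) = map phi (map (@sfrom _ G1) s).
Proof. by rewrite -!map_comp; apply: eq_map => st /=; rewrite sfrom_map. Qed.

Lemma map_fst_map s : map fst (mapw s) = map io (map fst s).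
Proof. by rewrite -!map_comp. Qed.

Lemma wend_map x s : wend (phi x) (mapw s) = phi (wend x s).
Proof. by rewrite /wend map_sto_map last_map. Qed.

Lemma wverts_map x s : wverts (phi x) (mapw s) = map phi (wverts x s).
Proof. by rewrite /wverts map_sto_map. Qed.

Lemma avoids_map b s : b \notin codom phi -> avoids b (mapw s).
Proof.
move=> hb; apply/allP => _ /mapP [st _ ->]; rewrite sfrom_map sto_map.
by apply/andP; split; apply: contraNneq hb => <-; apply: codom_f.
Qed.

Lemma mapw_preim s : (forall st, st \in s -> exists e, st.1 = io e) ->
  exists s0, s = mapw s0.
Proof.
elim: s => [|st s IH] hs; first by exists [::].
have [e he] := hs st (mem_head _ _).
have [s0 ->] : exists s0, s = mapw s0 by apply: IH => st' h; apply: hs; rewrite inE h orbT.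
by exists ((e, st.2) :: s0); case: st he {hs} => ? ? /= ->.
Qed.

Hypotheses (phi_inj : injective phi) (io_inj : injective io).

Lemma walk_map_inj x s : walk (phi x) (mapw s) = walk x s.
Proof.
elim: s x => [|st s IH] x //=.
by rewrite sfrom_map (inj_eq phi_inj) sto_map IH.
Qed.

Lemma scycle_map x s : scycle (phi x) (mapw s) = scycle x s.
Proof.
rewrite /scycle walk_map_inj wend_map (inj_eq phi_inj) map_fst_map map_sfrom_map.
by rewrite !(map_inj_uniq phi_inj) (map_inj_uniq io_inj); case: s.
Qed.

End MapWalk.

Section CactusTree.
Variables (A : Type) (G : graph A).

Lemma cactus_cycle_exists (h : gE G) : cactus G ->
  exists (x : gV G) s, scycle x s /\ h \in cedges s.
Proof. by case=> _ /(_ h) [S [hS [x [s [c hc]]] _]]; exists x, s; rewrite hc. Qed.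

Lemma cactus_cycle_uniq (h : gE G) x y s s' : cactus G ->
  scycle x s -> scycle y s' -> h \in cedges s -> h \in cedges s' ->
  cedges s = cedges s'.
Proof.
by case=> _ /(_ h) [S [_ _ hS]] c c' i i'; rewrite (hS _ _ c i) (hS _ _ c' i').
Qed.

Lemma tree_no_loop (e : gE G) : is_tree G -> gsrc e != gtgt e.
Proof.
move=> [_ /(_ (gsrc e) [:: (e, true)])]; apply: contraNneq => he.
by rewrite /scycle /= /sfrom /sto /wend /= he eqxx.
Qed.

Lemma connected_step (v w : gV G) : connected G -> v != w ->
  exists st : gE G * bool, sfrom st = v.
Proof.
move=> /(_ v w) [[|st s] [hw he]] hvw; first by rewrite -he eqxx in hvw.
by exists st; case/andP: hw => /eqP.
Qed.

Lemma indeg_outdeg1 (v : gV G) (ein eout : gE G) :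
  gtgt ein = v -> gsrc eout = v -> gsrc ein != v -> gtgt eout != v ->
  (forall e, (gsrc e == v) || (gtgt e == v) -> e = ein \/ e = eout) ->
  indeg v = 1%N /\ outdeg v = 1%N.
Proof.
move=> hin hout hin' hout' hall; rewrite /indeg /outdeg; split.
  rewrite -(cards1 ein); apply: eq_card => e; rewrite !inE.
  apply/idP/eqP => [ht|->]; last by rewrite hin.
  by case: (hall e); rewrite ?ht ?orbT // => he; rewrite he (negbTE hout') in ht.
rewrite -(cards1 eout); apply: eq_card => e; rewrite !inE.
apply/idP/eqP => [hs|->]; last by rewrite hout.
by case: (hall e); rewrite ?hs // => he; rewrite he (negbTE hin') in hs.
Qed.

End CactusTree.

Section GluedTree.
Variables (A : Type) (H t t' : graph A).
Variables (phi : gV t -> gV H) (phi' : gV t' -> gV H).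
Variables (io : gE t -> gE H) (io' : gE t' -> gE H).
Hypotheses (hsrc : forall e, gsrc (io e) = phi (gsrc e))
           (htgt : forall e, gtgt (io e) = phi (gtgt e))
           (hsrc' : forall g, gsrc (io' g) = phi' (gsrc g))
           (htgt' : forall g, gtgt (io' g) = phi' (gtgt g)).
Hypotheses (phi_inj : injective phi) (io_inj : injective io).
Hypothesis edges_cover : forall h, (exists e, h = io e) \/ (exists g, h = io' g).
Hypothesis edges_disj : forall e g, io e <> io' g.
Hypothesis htree : is_tree t.
Hypothesis hcac : oriented_cactus H.

Lemma scycle_uses_io' x s : scycle x s ->
  exists2 st, st \in s & exists g, st.1 = io' g.
Proof.
case: (boolP (has (fun st => st.1 \in codom io') s)) => [|/hasPn hs c].
  by case/hasP=> st hst /codomP [g hg]; exists st => //; exists g.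
have [s0 def_s] : exists s0, s = mapw io s0.
  apply: mapw_preim => st /hs; case: (edges_cover st.1) => [//|[g ->]].
  by rewrite codom_f.
move: c; rewrite def_s; case: s0 {def_s} => [|st0 s0] c; first by case/and5P: c.
have hx : x = phi (sfrom st0).
  by case/and5P: c => _ /= /andP[/eqP <- _] _ _ _; rewrite (sfrom_map hsrc htgt).
rewrite hx (scycle_map hsrc htgt phi_inj io_inj) in c.
by move: (htree.2 (sfrom st0) (st0 :: s0)); rewrite c.
Qed.

Section IsolatedVertex.
Variables (rho : gV t) (rho' : gV t') (v : gV t).
Hypothesis hroot : phi rho = phi' rho'.
Hypothesis hconn' : connected t'.
Hypothesis hv : phi v \notin codom phi'.

Definition incident e := (gsrc e == v) || (gtgt e == v).
Definition other_end e := if gsrc e == v then gtgt e else gsrc e.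
Definition leave e : gE H * bool := (io e, gsrc e == v).

Lemma incident_tgt e : incident e -> (gtgt e == v) = ~~ (gsrc e == v).
Proof.
rewrite /incident; case: (gsrc e =P v) => [<-|_] //= _.
by rewrite eq_sym (negbTE (tree_no_loop e htree)).
Qed.

Lemma other_end_neq e : other_end e != v.
Proof.
rewrite /other_end; case: (gsrc e =P v) => [<-|/eqP //].
by rewrite eq_sym tree_no_loop.
Qed.

Lemma sfrom_leave e : incident e -> sfrom (leave e) = phi v.
Proof.
rewrite /leave /sfrom /= hsrc htgt => hi; case: eqP => [-> //|hs].
by move: hi; rewrite /incident; case: eqP => // _ /eqP ->.
Qed.

Lemma sto_leave e : sto (leave e) = phi (other_end e).
Proof. by rewrite /leave /sto /other_end /= hsrc htgt; case: eqP. Qed.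

Lemma step_from_isolated st : sfrom st = phi v ->
  exists2 e, incident e & st = leave e.
Proof.
case: (edges_cover st.1) => [[e he]|[g hg]] hs; last first.
  by move: hv; rewrite -hs; case: st hg {hs} => h [] /= ->;
    rewrite /sfrom /= ?hsrc' ?htgt' codom_f.
case: st he hs => h b /= ->; rewrite /sfrom /= hsrc htgt.
case: b => /phi_inj hve; exists e.
- by rewrite /incident hve eqxx.
- by rewrite /leave hve eqxx.
- by rewrite /incident hve eqxx orbT.
- by rewrite /leave -hve (negbTE (tree_no_loop e htree)).
Qed.

Lemma step_into_isolated st : sto st = phi v ->
  exists2 e, incident e & st = flip_step (leave e).
Proof.
rewrite -sfrom_flip => /step_from_isolated [e hi hst].
by exists e; rewrite // -hst; case: st {hst} => ? [].
Qed.

Lemma io_incident_ends st e : st.1 = io e -> incident e ->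
  sfrom st = phi v \/ sto st = phi v.
Proof.
case: st => h [] /= ->; rewrite /sfrom /sto /= hsrc htgt;
  by case/orP=> /eqP ->; auto.
Qed.

Lemma avoids_incident s e : avoids (phi v) s -> incident e -> io e \notin map fst s.
Proof.
move=> /allP ha he; apply/mapP => -[st /ha /andP[h1 h2] hst].
by case: (io_incident_ends (esym hst) he) => /eqP; apply/negP.
Qed.

Lemma reach_root z : reach_off (phi v) (phi' z) (phi rho).
Proof.
have [s [hw he]] := hconn' z rho'.
exists (mapw io' s); rewrite (wend_map hsrc' htgt') he hroot.
by split; [apply: walk_map | | apply: avoids_map].
Qed.

Lemma isolated_cycle e : incident e -> exists st1 r st2,
  scycle (phi v) (st1 :: rcons r st2) /\ io e \in cedges (st1 :: rcons r st2).
Proof.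
move=> hi; have [x [s [c]]] := cactus_cycle_exists (io e) hcac.1.
rewrite inE => /mapP [st hs hst].
have [[|st1 r'] [c' hce]] := scycle_reroot c hs (io_incident_ends (esym hst) hi).
  by case/and5P: c'.
case/lastP: r' c' hce => [|r st2] c' hce.
  case/and5P: c' => _ /= /andP[/eqP /step_from_isolated [e1 _ ->] _] /eqP.
  by rewrite /wend /= sto_leave => /phi_inj /eqP; rewrite (negbTE (other_end_neq _)).
by exists st1, r, st2; rewrite hce inE hst map_f.
Qed.

(* The cycle through an edge at [v] leaves [phi v] along [e1], returns along
   [e2], and in between must use an edge of [t'], whose ends reach the root
   without meeting [phi v]. *)
Lemma incident_cycle e : incident e ->
  (exists2 e2, incident e2 & e2 != e) /\
  reach_off (phi v) (phi (other_end e)) (phi rho).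
Proof.
move=> hi; have [st1 [r [st2 [c hin]]]] := isolated_cycle hi.
have [/step_from_isolated [e1 hi1 hst1] hw hwe /step_into_isolated [e2 hi2 hst2] hav]
  := scycle_interior c.
rewrite hst1 sto_leave in hw hwe; rewrite hst2 sfrom_flip sto_leave in hwe.
have hne : e1 != e2.
  case/and5P: c => _ _ _ /= + _; rewrite map_rcons mem_rcons inE hst1 hst2 /=.
  by case/andP=> /norP[+ _] _; rewrite (inj_eq io_inj).
have hee : e = e1 \/ e = e2.
  move: hin; rewrite inE /= map_rcons !(in_cons, mem_rcons) hst1 hst2 /=.
  rewrite (negbTE (avoids_incident hav hi)) orbF !(inj_eq io_inj).
  by case/orP=> /eqP; auto.
have [st' hst' [g hg]] := scycle_uses_io' c.
have hst'r : st' \in r.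
  move: hst'; rewrite inE mem_rcons inE hst1 hst2 => /or3P[/eqP hh|/eqP hh|//].
    by case: (@edges_disj e1 g); rewrite -hg hh.
  by case: (@edges_disj e2 g); rewrite -hg hh.
have [z hz] : exists z, sfrom st' = phi' z.
  by case: st' hg {hst' hst'r} => h [] /= ->; rewrite /sfrom /= ?hsrc' ?htgt'; eexists.
have [r1 r2] := reach_off_mid hw hav hst'r.
rewrite hz in r1 r2; rewrite hwe in r2.
have reach1 := reach_off_trans r1 (reach_root z).
have reach2 := reach_off_trans (reach_off_sym r2) (reach_root z).
case: hee => ->; split => //; first by exists e2; rewrite // eq_sym.
by exists e1.
Qed.

Lemma incident_pair_cycle e1 e2 : incident e1 -> incident e2 -> e1 != e2 ->
  exists C, [/\ scycle (phi v) C, io e1 \in cedges C, io e2 \in cedges C,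
    forall e, incident e -> io e \in cedges C -> e = e1 \/ e = e2
  & directed_cycle C -> (gsrc e1 == v) = ~~ (gsrc e2 == v)].
Proof.
move=> hi1 hi2 hne; have [_ r1] := incident_cycle hi1; have [_ r2] := incident_cycle hi2.
have [w [hw hwe hwa]] := reach_off_trans r1 (reach_off_sym r2).
have [p [hp hpe hpu hps]] := uniq_subwalk hw; rewrite hwe in hpe.
have hpa : avoids (phi v) p by apply/allP => st /hps; apply: (allP hwa).
exists (leave e1 :: rcons p (flip_step (leave e2))); split.
- rewrite -(sfrom_leave hi1); apply: scycle_close (sto_leave e1) _ _ _ _.
  + by rewrite walk_rcons hp hpe sfrom_flip sto_leave eqxx.
  + by rewrite wend_rcons sto_flip !sfrom_leave.
  + rewrite /wverts map_rcons -rcons_cons rcons_uniq -/(wverts _ p) hpu andbT.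
    by rewrite sto_flip sfrom_leave // avoids_notin_wverts // (inj_eq phi_inj) other_end_neq.
  + rewrite map_rcons mem_rcons in_cons negb_or /leave /= (inj_eq io_inj) hne.
    exact: avoids_incident hpa hi1.
- by rewrite inE mem_head.
- by rewrite inE /= map_rcons in_cons mem_rcons mem_head orbT.
- move=> e hi; rewrite inE /= map_rcons !(in_cons, mem_rcons) /=.
  rewrite (negbTE (avoids_incident hpa hi)) orbF !(inj_eq io_inj).
  by case/orP=> /eqP; auto.
- move=> hd; have h2 : flip_step (leave e2) \in leave e1 :: rcons p (flip_step (leave e2)).
    by rewrite in_cons mem_rcons mem_head orbT.
  exact: directed_cycle_dir hd (mem_head _ _) h2.
Qed.

Hypothesis hA4 : ~ (indeg v = 1%N /\ outdeg v = 1%N).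

Lemma isolated_vertex_false : False.
Proof.
have hvr : v != rho by apply: contraNneq hv => ->; rewrite hroot codom_f.
have [[e0 b] hst0] := connected_step htree.1 hvr.
have hi0 : incident e0 by case: b hst0; rewrite /sfrom /incident /= => ->; rewrite eqxx ?orbT.
have [[e2 hi2]] := incident_cycle hi0; rewrite eq_sym => hne _.
have [C [c i0 i2 hC dir]] := incident_pair_cycle hi0 hi2 hne.
have hall e : incident e -> e = e0 \/ e = e2.
  move=> hi; case: (eqVneq e0 e) => [->|hne0]; first by left.
  have [D [d j0 j _ _]] := incident_pair_cycle hi0 hi hne0.
  by apply: hC hi _; rewrite (cactus_cycle_uniq hcac.1 c d i0 j0).
have t0 := incident_tgt hi0; have t2 := incident_tgt hi2.
apply: hA4; move: (dir (hcac.2 _ _ c)).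
case: (boolP (gsrc e0 == v)) => hs0 /esym hs2.
- apply: (@indeg_outdeg1 _ _ v e2 e0).
  + by apply/eqP; rewrite t2 hs2.
  + exact/eqP.
  + exact: hs2.
  + by rewrite t0 hs0.
  + by move=> e /hall []; auto.
- move/negbFE: hs2 => hs2; apply: (@indeg_outdeg1 _ _ v e0 e2).
  + by apply/eqP; rewrite t0 hs0.
  + exact/eqP.
  + exact: hs0.
  + by rewrite t2 hs2.
  + by move=> e /hall.
Qed.

End IsolatedVertex.

Lemma glued_partner rho rho' : phi rho = phi' rho' -> connected t' ->
    (forall v : gV t, ~ (indeg v = 1%N /\ outdeg v = 1%N)) ->
  forall v : gV t, exists v', phi' v' = phi v.
Proof.
move=> hroot hconn' hA4 v.
case: (boolP (phi v \in codom phi')) => [/codomP [v' ->]|hv]; first by exists v'.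
by case: (isolated_vertex_false hroot hconn' hv (hA4 v)).
Qed.

End GluedTree.

Section ReturnCycle.
Variables (A : Type) (H t t' : graph A).
Variables (phi : gV t -> gV H) (phi' : gV t' -> gV H).
Variables (io : gE t -> gE H) (io' : gE t' -> gE H).
Hypotheses (hsrc : forall e, gsrc (io e) = phi (gsrc e))
           (htgt : forall e, gtgt (io e) = phi (gtgt e))
           (hsrc' : forall g, gsrc (io' g) = phi' (gsrc g))
           (htgt' : forall g, gtgt (io' g) = phi' (gtgt g)).
Hypothesis phi'_inj : injective phi'.
Hypothesis edges_disj : forall e g, io e <> io' g.
Hypothesis hconn' : connected t'.

Lemma return_cycle e v' w' :
  phi' v' = phi (gsrc e) -> phi' w' = phi (gtgt e) -> exists p,
  [/\ walk w' p, wend w' p = v', uniq (wverts w' p)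
    & scycle (phi (gsrc e)) ((io e, true) :: mapw io' p)].
Proof.
move=> hv hw; have [s [hs hse]] := hconn' w' v'.
have [p [hp hpe hpu _]] := uniq_subwalk hs; rewrite hse in hpe.
exists p; split => //.
have hfrom : sfrom (io e, true) = phi (gsrc e) by rewrite /sfrom /= hsrc.
have hto : sto (io e, true) = phi' w' by rewrite /sto /= htgt.
rewrite -hfrom; apply: scycle_close hto _ _ _ _.
- exact: walk_map.
- by rewrite (wend_map hsrc' htgt') hpe hfrom.
- by rewrite (wverts_map hsrc' htgt') (map_inj_uniq phi'_inj).
- by rewrite map_fst_map; apply/mapP => -[g _ /edges_disj].
Qed.

End ReturnCycle.

Section EdgeReflection.
Variables (A : Type) (H t t' : graph A).
Variables (phi : gV t -> gV H) (phi' : gV t' -> gV H).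
Variables (io : gE t -> gE H) (io' : gE t' -> gE H).
Hypotheses (hsrc : forall e, gsrc (io e) = phi (gsrc e))
           (htgt : forall e, gtgt (io e) = phi (gtgt e))
           (hsrc' : forall g, gsrc (io' g) = phi' (gsrc g))
           (htgt' : forall g, gtgt (io' g) = phi' (gtgt g)).
Hypotheses (phi_inj : injective phi) (phi'_inj : injective phi')
           (io'_inj : injective io').
Hypothesis edges_disj : forall e g, io e <> io' g.
Hypotheses (htree : is_tree t) (htree' : is_tree t').
Hypothesis partner : forall u', exists u, phi u = phi' u'.
Hypothesis hcac : oriented_cactus H.

(* The cycle through an edge [g] of [t'] closes up through [t] alone, so the
   cactus property forbids a second edge of [t'] on the cycle through [e]. *)
Lemma return_path_single e w' p : walk w' p -> uniq (wverts w' p) -> p != [::] ->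
  scycle (phi (gsrc e)) ((io e, true) :: mapw io' p) -> exists st, p = [:: st].
Proof.
case: p => [|st1 [|st2 p]] // hp hpu _ c; first by exists st1.
have [a ha] := partner (gsrc st1.1); have [b hb] := partner (gtgt st1.1).
have [q [_ _ _ c']] := return_cycle hsrc' htgt' hsrc htgt phi_inj
  (fun g e h => edges_disj (esym h)) htree.1 ha hb.
have i1 : io' st1.1 \in cedges ((io e, true) :: mapw io' [:: st1, st2 & p]).
  by rewrite inE /= !inE eqxx orbT.
have i1' : io' st1.1 \in cedges ((io' st1.1, true) :: mapw io q) by rewrite inE mem_head.
have i2 : io' st2.1 \in cedges ((io e, true) :: mapw io' [:: st1, st2 & p]).
  by rewrite inE /= !inE eqxx !orbT.
rewrite (cactus_cycle_uniq hcac.1 c c' i1 i1') inE /= in_cons map_fst_map in i2.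
case/orP: i2 => [/eqP/io'_inj h|/mapP [e0 _ /esym/edges_disj []]].
by move: (uniq_wverts_edges hp hpu); rewrite /= inE h eqxx.
Qed.

Lemma edge_reflect v w v' w' : phi' v' = phi v -> phi' w' = phi w ->
  has_edge v w -> has_edge w' v'.
Proof.
move=> hv hw [e [hs ht]]; rewrite -hs in hv; rewrite -ht in hw.
have [p [hp hpe hpu c]] := return_cycle hsrc htgt hsrc' htgt' phi'_inj edges_disj
  htree'.1 hv hw.
have hp0 : p != [::].
  apply: contra_neq (tree_no_loop e htree) => hp0; apply/phi_inj.
  by rewrite -hv -hw -hpe hp0.
have [st hst] := return_path_single hp hpu hp0 c; subst p.
have := directed_cycle_dir (hcac.2 _ _ c) (mem_head _ _) (mem_last _ [:: _]).
case: st hp hpe {hpu c hp0} => g [] //= /andP[/eqP hg _] hge _.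
by exists g; rewrite -hg -hge.
Qed.

End EdgeReflection.

Lemma glue_id (X : finType) (a y : X) : val (glue a a y) = y.
Proof. by rewrite /glue /=; case: eqP => [->|]. Qed.

Section ProductVertices.
Variables (A : Type) (t t' : gmono A).
Hypotheses (hrt : gin t = gout t) (hrt' : gin t' = gout t').

Lemma gmul_rooted : gin (gmul t t') = gout (gmul t t').
Proof. by apply: val_inj; rewrite /= -hrt' eqxx hrt. Qed.

Lemma embLE (v : gV t) : val (val (embL t' v)) = inl v.
Proof. by rewrite /embL gmul_rooted glue_id. Qed.

Lemma embRE (v' : gV t') :
  val (val (embR t v')) = if v' == gout t' then inl (gin t) else inr v'.
Proof. by rewrite /embR gmul_rooted glue_id. Qed.

Lemma embT_inj (x y : gV (Tgraph t t')) : val (val x) = val (val y) -> x = y.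
Proof. by move=> /val_inj /val_inj. Qed.

Lemma embR_root : embR t (gin t') = embL t' (gin t).
Proof. by apply: embT_inj; rewrite embRE embLE hrt' eqxx. Qed.

Lemma embLR_cover (x : gV (Tgraph t t')) :
  (exists v, x = embL t' v) \/ (exists v', x = embR t v').
Proof.
case E: (val (val x)) => [v|v']; [left; exists v | right; exists v'];
  apply: embT_inj; rewrite E ?embLE ?embRE //.
case: eqP => // hv; have := valP (val x); rewrite E hv eqxx /=.
by case: eqP.
Qed.

End ProductVertices.

Section PartitionQuotient.
Variables (A : Type) (t t' : gmono A).
Hypotheses (hrt : gin t = gout t) (hrt' : gin t' = gout t').
Hypotheses (htree : is_tree t) (htree' : is_tree t').
Hypotheses (hA4 : forall v : gV t, ~ (indeg v = 1%N /\ outdeg v = 1%N))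
           (hA4' : forall v : gV t', ~ (indeg v = 1%N /\ outdeg v = 1%N)).
Variables (P : {set {set gV (Tgraph t t')}}) (hP : partition P [set: gV (Tgraph t t')]).
Hypothesis hPV : forall B, B \in P -> forall v w : gV t,
  embL t' v \in B -> embL t' w \in B -> v = w.
Hypothesis hPV' : forall B, B \in P -> forall v w : gV t',
  embR t v \in B -> embR t w \in B -> v = w.
Hypothesis hcac : oriented_cactus (qgraph hP).

Definition qblock x : gV (qgraph hP) := exist _ (pblock P x) (pblock_in hP x).
Definition qL v := qblock (embL t' v).
Definition qR v' := qblock (embR t v').

Lemma mem_qblock x : x \in pblock P x.
Proof. by rewrite mem_pblock (cover_partition hP) inE. Qed.

Lemma qblock_eq x y : qblock x = qblock y -> y \in pblock P x.
Proof. by move/(congr1 val) => /= ->; apply: mem_qblock. Qed.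

Lemma qL_inj : injective qL.
Proof. by move=> v w /qblock_eq; apply: hPV (pblock_in hP _) _ _ (mem_qblock _). Qed.

Lemma qR_inj : injective qR.
Proof. by move=> v w /qblock_eq; apply: hPV' (pblock_in hP _) _ _ (mem_qblock _). Qed.

Lemma qL_root : qL (gin t) = qR (gin t').
Proof. by rewrite /qR embR_root. Qed.

Lemma qL_partner v : exists v', qR v' = qL v.
Proof.
apply: (glued_partner (phi := qL) (phi' := qR) (io := inl) (io' := inr)
  (fun _ => erefl) (fun _ => erefl) (fun _ => erefl) (fun _ => erefl)
  qL_inj _ _ _ htree hcac qL_root htree'.1 hA4) => //.
- by move=> e1 e2 [].
- by case=> e; [left | right]; exists e.
Qed.

Lemma qR_partner v' : exists v, qL v = qR v'.
Proof.
apply: (glued_partner (phi := qR) (phi' := qL) (io := inr) (io' := inl)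
  (fun _ => erefl) (fun _ => erefl) (fun _ => erefl) (fun _ => erefl)
  qR_inj _ _ _ htree' hcac (esym qL_root) htree.1 hA4') => //.
- by move=> e1 e2 [].
- by case=> e; [right | left]; exists e.
Qed.

Lemma qL_edge_reflect v w v' w' : qR v' = qL v -> qR w' = qL w ->
  has_edge v w -> has_edge w' v'.
Proof.
apply: (edge_reflect (phi := qL) (phi' := qR) (io := inl) (io' := inr)
  (fun _ => erefl) (fun _ => erefl) (fun _ => erefl) (fun _ => erefl)
  qL_inj qR_inj _ _ htree htree' qR_partner hcac).
- by move=> g1 g2 [].
- by [].
Qed.

Lemma qR_edge_reflect v w v' w' : qL v = qR v' -> qL w = qR w' ->
  has_edge v' w' -> has_edge w v.
Proof.
apply: (edge_reflect (phi := qR) (phi' := qL) (io := inr) (io' := inl)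
  (fun _ => erefl) (fun _ => erefl) (fun _ => erefl) (fun _ => erefl)
  qR_inj qL_inj _ _ htree' htree qL_partner hcac).
- by move=> e1 e2 [].
- by [].
Qed.

Lemma block_pairE B v v' : B \in P -> embL t' v \in B -> embR t v' \in B ->
  B = [set embL t' v; embR t v'].
Proof.
move=> hB hv hv'; apply/setP => y; rewrite !inE.
apply/idP/idP => [hy|/orP[]/eqP -> //].
case: (embLR_cover hrt hrt' y) hy => -[w ->] hy.
  by rewrite (hPV hB hy hv) eqxx.
by rewrite (hPV' hB hy hv') eqxx orbT.
Qed.

Lemma blocks_pairs B : B \in P -> exists v v', B = [set embL t' v; embR t v'].
Proof.
move=> hB; have [x hx] : exists x, x \in B.
  by apply/set0Pn; apply: contraTneq hB => ->; case/and3P: hP.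
have <- := def_pblock (partition_trivIset hP) hB hx.
case: (embLR_cover hrt hrt' x) => -[v ->].
  have [v' /esym/qblock_eq hv'] := qL_partner v.
  by exists v, v'; apply: block_pairE; rewrite ?pblock_in ?mem_qblock.
have [w /esym/qblock_eq hw] := qR_partner v.
by exists w, v; apply: block_pairE; rewrite ?pblock_in ?mem_qblock.
Qed.

Lemma root_block : pblock P (embL t' (gin t)) = [set embL t' (gin t)].
Proof.
have hR : embR t (gin t') \in pblock P (embL t' (gin t)).
  by rewrite embR_root ?mem_qblock.
by rewrite (block_pairE (pblock_in hP _) (mem_qblock _) hR) embR_root // setUid.
Qed.

Lemma quotient_matching : exists f : gV t -> gV t',
  [/\ bijective f, forall v, embR t (f v) \in pblock P (embL t' v)
    & forall v w, has_edge v w <-> has_edge (f w) (f v)].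
Proof.
have [f hf] := fin_all_exists qL_partner.
have [g hg] := fin_all_exists qR_partner.
exists f; split.
- by exists g => [v|v']; [apply: qL_inj; rewrite hg hf | apply: qR_inj; rewrite hf hg].
- by move=> v; apply: qblock_eq; rewrite -/(qL v) -hf.
- move=> v w; split; first exact: qL_edge_reflect.
  exact: qR_edge_reflect (esym (hf w)) (esym (hf v)).
Qed.

End PartitionQuotient.

Theorem lemma2p27 (R : realType) (A : algType R[i]) (phi : A -> (R[i])^o)
  (hphi : tracial_state phi)
  (t t' : gmono A) (ht : inD t) (ht' : inD t')
  (P : {set {set gV (Tgraph t t')}})
  (hP : partition P [set: gV (Tgraph t t')])
  (hPV : forall B, B \in P -> forall v w : gV t,
           embL t' v \in B -> embL t' w \in B -> v = w)
  (hPV' : forall B, B \in P -> forall v w : gV t',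
           embR t v \in B -> embR t w \in B -> v = w)
  (hcac : oriented_cactus (qgraph hP)) :
  [/\ forall B, B \in P -> exists (v : gV t) (v' : gV t'),
        B = [set embL t' v; embR t v'],
      pblock P (embL t' (gin t)) = [set embL t' (gin t)],
      embR t (gin t') = embL t' (gin t)
    & exists f : gV t -> gV t',
        [/\ bijective f,
            forall v, embR t (f v) \in pblock P (embL t' v)
          & forall v w : gV t, has_edge v w <-> has_edge (f w) (f v)]].
Proof.
case: ht => hrt htree _ _ hA4; case: ht' => hrt' htree' _ _ hA4'.
split.
- exact (blocks_pairs hrt hrt' htree htree' hA4 hA4' hPV hPV' hcac).
- exact (root_block hrt hrt' hP hPV hPV').
- exact: embR_root.
- exact (quotient_matching hrt hrt' htree htree' hA4 hA4' hPV hPV' hcac).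
Qed.
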